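(* Let $n\ge2$ and let $\mathbf{r}$ be an $\mathbb{R}^n$-valued random vector with $\mathbb{E}|r_i|<\infty$ for all $i$; set $\mathbf{R}=e^{\mathbf{r}}$ (componentwise), $\mathbf{m}=\mathbb{E}[\mathbf{r}]$, and $J(\boldsymbol{\pi})=\mathbb{E}[\log\langle\boldsymbol{\pi},\mathbf{R}\rangle]-\langle\boldsymbol{\pi},\mathbf{m}\rangle$ for $\boldsymbol{\pi}\in\Delta_n$. If $\boldsymbol{\pi}^\star$ maximizes $J$ over $\Delta_n$, then for every $\boldsymbol{\pi}\in\Delta_n$, $$\mathbb{E}\Big[\log\frac{\langle\boldsymbol{\pi},\mathbf{R}\rangle}{\langle\boldsymbol{\pi}^\star,\mathbf{R}\rangle}\Big]\le\log\big(1+\langle\boldsymbol{\pi}-\boldsymbol{\pi}^\star,\mathbf{m}\rangle\big).$$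
   Context: $\Delta_n=\{\mathbf{x}\in[0,1]^n:\sum_ix_i=1\}$. $J(\boldsymbol{\pi})$ equals $\mathbb{E}[\gamma(\boldsymbol{\pi},\mathbf{r})]$ where $\gamma(\boldsymbol{\pi},\mathbf{r})=\log\big(\sum_{i:\pi_i>0}\pi_ie^{r_i}\big)-\sum_{i:\pi_i>0}\pi_ir_i$. *)

From HB Require Import structures.
From mathcomp Require Import all_boot all_order all_algebra.
From mathcomp Require Import all_classical all_reals all_analysis.
Set Implicit Arguments. Unset Strict Implicit. Unset Printing Implicit Defensive.
Import Order.TTheory GRing.Theory Num.Theory.
Local Open Scope ring_scope.

Definition simplex (R : realType) (n : nat) (x : 'I_n -> R) : Prop :=
  (forall i, 0 <= x i <= 1) /\ \sum_(i < n) x i = 1.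

Definition pR (R : realType) (n : nat) (T : Type) (r : T -> 'I_n -> R)
  (p : 'I_n -> R) (w : T) : R := \sum_(i < n) p i * expR (r w i).

Definition meanr (R : realType) (d : measure_display) (T : measurableType d)
  (P : probability T R) (n : nat) (r : T -> 'I_n -> R) (i : 'I_n) : R :=
  Rintegral P setT (fun w => r w i).

Definition Jobj (R : realType) (d : measure_display) (T : measurableType d)
  (P : probability T R) (n : nat) (r : T -> 'I_n -> R) (p : 'I_n -> R) : R :=
  Rintegral P setT (fun w => ln (pR r p w)) - \sum_(i < n) p i * meanr P r i.

From HB Require Import structures.
From mathcomp Require Import all_boot all_order all_algebra.
From mathcomp Require Import all_classical all_reals all_analysis.
From mathcomp Require Import ring lra measurable_realfun.
Set Implicit Arguments.
Unset Strict Implicit.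
Unset Printing Implicit Defensive.
Import Order.TTheory GRing.Theory Num.Theory.
Import numFieldNormedType.Exports.
Local Open Scope ring_scope.

(* With X := <p, R> / <pstar, R>, optimality of pstar along the segment from
   pstar towards p gives E[ln (1 + t (X - 1))] <= t <p - pstar, m> for t in
   [0, 1].  As t decreases to 0, ln (1 + t (X - 1)) / t increases to X - 1, so
   monotone convergence yields E[X] <= 1 + <p - pstar, m>; Jensen's inequality
   for the concave ln then concludes. *)

Section ln_inequalities.
Variable R : realType.
Implicit Types a b u x K : R.

Lemma onemV_le_ln x : 0 < x -> 1 - x^-1 <= ln x.
Proof.
move=> x0; have xV0 : 0 < x^-1 by rewrite invr_gt0.
have := @le_ln1Dx R (x^-1 - 1); rewrite [1 + _]addrC subrK lnV ?posrE //.
by move=> /(_ ltac:(lra)); lra.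
Qed.

Lemma ln_le_tangent x K : 0 < x -> 0 < K -> ln x <= x / K + ln K - 1.
Proof.
move=> x0 K0; have xK0 : 0 < x / K by rewrite divr_gt0.
have := @le_ln1Dx R (x / K - 1); rewrite [1 + _]addrC subrK ln_div ?posrE //.
by move=> /(_ ltac:(lra)); lra.
Qed.

(* Concavity of ln between 1 and 1 + u / a, with weight a / b. *)
Lemma nondecreasing_mulr_ln1Dx u a b : -1 < u -> 1 <= a -> a <= b ->
  a * ln (1 + a^-1 * u) <= b * ln (1 + b^-1 * u).
Proof.
move=> u1 a1 ab; have a0 : 0 < a by lra.
have b0 : 0 < b by lra.
have aV0 : 0 < a^-1 by rewrite invr_gt0.
have aV1 : a^-1 <= 1 by rewrite invf_le1.
have lnD0 : 0 < 1 + a^-1 * u.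
  have -> : 1 + a^-1 * u = (1 - a^-1) + a^-1 * (1 + u) by ring.
  suff : 0 < a^-1 * (1 + u) by lra.
  by rewrite mulr_gt0 //; lra.
have ab0 : 0 <= a / b by rewrite divr_ge0 //; lra.
have ab1 : a / b <= 1 by rewrite ler_pdivrMr // mul1r.
have := @concave_ln R (Itv01 ab0 ab1) (1 + a^-1 * u) 1 lnD0 ltr01.
rewrite !convRE /= ln1 mulr0 addr0 mulr1 /unstable.onem.
have -> : a / b * (1 + a^-1 * u) + (1 - a / b) = 1 + b^-1 * u.
  by field; apply/andP; split; lra.
move=> /(ler_wpM2l (ltW b0)); rewrite mulrA mulrCA divff ?gt_eqF // mulr1; exact.
Qed.

Lemma cvg_mulr_ln1Dx u : -1 < u ->
  (k.+1%:R * ln (1 + k.+1%:R^-1 * u) @[k --> \oo] --> u)%classic.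
Proof.
move=> u1.
apply: (@squeeze_cvgr _ _ _ _ (fun k => u - 2 * u ^+ 2 * harmonic k) (fun=> u)).
- near=> k.
  have a2 : 2 <= k.+1%:R :> R by rewrite ler_nat ltnS; near: k; exact: nbhs_infty_ge.
  rewrite /harmonic; set a := k.+1%:R in a2 *; set h := a^-1 * u.
  have a0 : 0 < a by lra.
  have uE : u = a * h by rewrite /h mulrA divff ?gt_eqF ?mul1r.
  have h2 : -1 / 2 < h by rewrite -(ltr_pM2l a0) -uE; lra.
  have ln_ge : h - 2 * h ^+ 2 <= ln (1 + h).
    have h1 : 0 < 1 + h by lra.
    suff : h - 2 * h ^+ 2 <= 1 - (1 + h)^-1 by have := onemV_le_ln h1; lra.
    have -> : 1 - (1 + h)^-1 = h / (1 + h) by field; lra.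
    rewrite ler_pdivlMr //.
    suff : 0 <= h ^+ 2 * (1 + 2 * h) by lra.
    by rewrite mulr_ge0 ?sqr_ge0 //; lra.
  apply/andP; split.
  + have -> : u - 2 * u ^+ 2 * a^-1 = a * (h - 2 * h ^+ 2) by rewrite uE; field; lra.
    by rewrite ler_pM2l.
  + by rewrite [X in _ <= X]uE ler_pM2l // le_ln1Dx //; lra.
- have := cvgB (cvg_cst u) (@cvgMl_tmp _ _ _ _ _ (2 * u ^+ 2) _ (@cvg_harmonic R)).
  by rewrite mulr0 subr0; apply.
- exact: cvg_cst.
Unshelve. all: end_near.
Qed.

End ln_inequalities.

Section monotone_convergence_bound.
Local Open Scope classical_set_scope.
Context d (T : measurableType d) (R : realType) (mu : {measure set T -> \bar R}).

Lemma nondecreasing_cvg_Rintegral_le (f : (T -> R)^nat) (g : T -> R) (B : R) :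
  (forall k, mu.-integrable setT (EFin \o f k)) ->
  (forall w, nondecreasing_seq (f^~ w)) ->
  (forall w, f^~ w @ \oo --> g w) ->
  (forall k, \int[mu]_(w in setT) f k w <= B) ->
  mu.-integrable setT (EFin \o g) /\ \int[mu]_(w in setT) g w <= B.
Proof.
move=> fi f_nd f_g fB.
pose h k w := f k w - f 0%N w.
have fi0 := fi 0%N.
have hi k : mu.-integrable setT (EFin \o h k) := integrableB measurableT (fi k) fi0.
have h_ge0 k w : 0 <= h k w by rewrite subr_ge0 f_nd.
have h_nd w : nondecreasing_seq (h^~ w) by move=> m k mk; rewrite lerD2r f_nd.
have mf k : measurable_fun setT (f k).
  by apply/measurable_EFinP; exact: measurable_int (fi k).
have mh k : measurable_fun setT (fun w => (h k w)%:E).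
  by apply/measurable_EFinP; exact: measurable_funB.
have mg : measurable_fun setT g by apply: measurable_fun_cvg mf _ => w _; exact: f_g.
have h_lim w : limn (EFin \o h^~ w) = (g w - f 0%N w)%:E.
  have hg : h^~ w @ \oo --> g w - f 0%N w by apply: cvgB (f_g w) (cvg_cst _).
  by rewrite EFin_lim ?(cvg_lim _ hg) //; exact: cvgP hg.
have hB k : (\int[mu]_(w in setT) (h k w)%:E
             <= (B - \int[mu]_(w in setT) f 0%N w)%:E)%E.
  rewrite -(fineK (integrable_fin_num measurableT (hi k))) lee_fin.
  by rewrite -/(Rintegral _ _ _) RintegralB // lerD2r.
have gf_le : (\int[mu]_(w in setT) (g w - f 0%N w)%:E
              <= (B - \int[mu]_(w in setT) f 0%N w)%:E)%E.
  rewrite (eq_integral (fun w => limn (EFin \o h^~ w))); last first.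
    by move=> w _; rewrite h_lim.
  rewrite monotone_convergence //.
  - apply: lime_le; last exact: nearW.
    apply: ereal_nondecreasing_is_cvgn => m k mk.
    by apply: ge0_le_integral => // w _; rewrite lee_fin ?h_nd.
  - by move=> k w _; rewrite lee_fin.
  - by move=> w _ m k mk; rewrite lee_fin h_nd.
have f0_le_g w : f 0%N w <= g w.
  rewrite -(cvg_lim _ (f_g w)) //.
  by apply: nondecreasing_cvgn_le (f_nd w) _ _; exact: cvgP (f_g w).
have gfi : mu.-integrable setT (EFin \o (fun w => g w - f 0%N w)).
  apply/integrableP; split; first by apply/measurable_EFinP; exact: measurable_funB.
  rewrite (eq_integral (fun w => (g w - f 0%N w)%:E)); last first.
    by move=> w _; rewrite /= ger0_norm ?subr_ge0.
  by apply: le_lt_trans gf_le _; rewrite ltry.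
have gi : mu.-integrable setT (EFin \o g).
  apply: eq_integrable (integrableD measurableT gfi fi0) => // w _.
  by rewrite /= -EFinD subrK.
split=> //.
suff : \int[mu]_(w in setT) (g w - f 0%N w) <= B - \int[mu]_(w in setT) f 0%N w.
  by rewrite RintegralB //; lra.
by rewrite -lee_fin /Rintegral fineK //; exact: integrable_fin_num.
Qed.

End monotone_convergence_bound.

Section jensen_ln.
Local Open Scope classical_set_scope.
Context d (T : measurableType d) (R : realType) (P : probability T R).

Lemma probability_Rintegral_cst (c : R) : \int[P]_(w in setT) c = c.
Proof.
rewrite Rintegral_cst // -[RHS]mulr1; congr (_ * _).
exact: (congr1 fine (probability_setT P)).
Qed.

(* Tangent line of ln at K; when K <= 0 the junk value ln K = 0 is still an
   upper bound, through the tangent at 1. *)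
Lemma Rintegral_ln_le (X : T -> R) (K : R) :
  (forall w, 0 < X w) ->
  P.-integrable setT (EFin \o X) ->
  P.-integrable setT (EFin \o (fun w => ln (X w))) ->
  \int[P]_(w in setT) X w <= K -> \int[P]_(w in setT) ln (X w) <= ln K.
Proof.
move=> X0 Xi lnXi XK.
have tangent c : 0 < c ->
    \int[P]_(w in setT) ln (X w) <= \int[P]_(w in setT) X w / c + ln c - 1.
  move=> c0.
  have Xci : P.-integrable setT (EFin \o (fun w => X w / c)).
    exact: eq_integrable (integrableZr measurableT c^-1 Xi).
  have ci : P.-integrable setT (EFin \o (fun=> ln c - 1)).
    exact: finite_measure_integrable_cst.
  have tXi : P.-integrable setT (EFin \o (fun w => X w / c + (ln c - 1))).
    exact: eq_integrable (integrableD measurableT Xci ci).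
  apply: le_trans (le_Rintegral measurableT lnXi tXi _) _.
    by move=> w _; rewrite addrA; exact: ln_le_tangent.
  by rewrite RintegralD // RintegralZr // probability_Rintegral_cst addrA.
have [K0|K0] := leP K 0.
- rewrite ln0 //; have := tangent 1 ltr01; rewrite ln1 invr1 mulr1; lra.
- apply: le_trans (tangent K K0) _.
  suff : \int[P]_(w in setT) X w / K <= 1 by lra.
  by rewrite ler_pdivrMr // mul1r.
Qed.

End jensen_ln.

Section simplex_combinations.
Variables (R : realType) (n : nat).
Implicit Types (p q : 'I_n -> R) (x : 'I_n -> R).

Lemma simplex_segment p q t : simplex p -> simplex q -> 0 <= t <= 1 ->
  simplex (fun i => q i + t * (p i - q i)).
Proof.
move=> [p01 p1] [q01 q1] /andP[t0 t1]; split.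
- move=> i; have /andP[pi0 pi1] := p01 i; have /andP[qi0 qi1] := q01 i.
  apply/andP; split; nra.
- by rewrite big_split /= -mulr_sumr sumrB p1 q1 subrr mulr0 addr0.
Qed.

Lemma simplex_sum_bounded q x (a b : R) : simplex q -> (forall i, a <= x i <= b) ->
  a <= \sum_(i < n) q i * x i <= b.
Proof.
move=> [q01 q1] xab.
have q0 i : 0 <= q i by case/andP: (q01 i).
rewrite -[a]mul1r -[b]mul1r -{1 2}q1 !mulr_suml; apply/andP; split.
- by apply: ler_sum => i _; apply: ler_wpM2l; case/andP: (xab i).
- by apply: ler_sum => i _; apply: ler_wpM2l; case/andP: (xab i).
Qed.

End simplex_combinations.

Section portfolio_value.
Variables (R : realType) (n : nat) (T : Type) (r : T -> 'I_n -> R).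
Implicit Types (p q : 'I_n -> R) (w : T).

Lemma pR_segment p q t w :
  pR r (fun i => q i + t * (p i - q i)) w = pR r q w + t * (pR r p w - pR r q w).
Proof.
rewrite /pR -sumrB mulr_sumr -big_split /=.
by apply: eq_bigr => i _; ring.
Qed.

Lemma pR_expR_bounds q w : simplex q ->
  expR (- \sum_(j < n) `|r w j|) <= pR r q w <= expR (\sum_(j < n) `|r w j|).
Proof.
move=> hq; apply: simplex_sum_bounded hq _ => i; rewrite !ler_expR -ler_norml.
by rewrite (bigD1 i) //= lerDl; apply: sumr_ge0.
Qed.

Lemma pR_gt0 q w : simplex q -> 0 < pR r q w.
Proof.
by move=> /(pR_expR_bounds w) /andP[+ _]; apply: lt_le_trans; exact: expR_gt0.
Qed.

Lemma ln_pR_bound q w : simplex q ->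
  `|ln (pR r q w)| <= \sum_(j < n) `|r w j|.
Proof.
move=> hq; have /andP[lo hi] := pR_expR_bounds w hq.
have pR0 := pR_gt0 w hq.
rewrite ler_norml; apply/andP; split.
- by rewrite -[X in X <= _]expRK ler_ln ?posrE ?expR_gt0.
- by rewrite -[X in _ <= X]expRK ler_ln ?posrE ?expR_gt0.
Qed.

End portfolio_value.

Section log_optimal.
Local Open Scope classical_set_scope.
Context (R : realType) d (T : measurableType d) (P : probability T R).
Variables (n : nat) (r : T -> 'I_n -> R).
Hypothesis r_integrable : forall i : 'I_n, P.-integrable setT (fun w => (r w i)%:E).

Lemma integrable_ln_pR q : simplex q ->
  P.-integrable setT (EFin \o (fun w => ln (pR r q w))).
Proof.
move=> hq.
have mr i : measurable_fun setT (r^~ i).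
  by apply/measurable_EFinP; exact: measurable_int (r_integrable i).
have Mi : P.-integrable setT (EFin \o (fun w => \sum_(j < n) `|r w j|)).
  have := integrable_sum measurableT (index_enum _) (P := xpredT)
    (fun i _ => integrable_abse (r_integrable i)).
  by apply: eq_integrable => // w _; rewrite /= -sumEFin.
apply: (le_integrable measurableT _ _ Mi).
- apply/measurable_EFinP; apply: measurableT_comp => //.
  apply: measurable_sum => i; apply: measurable_funM => //.
  exact: measurableT_comp.
- move=> w _ /=; rewrite lee_fin [leRHS]ger0_norm ?sumr_ge0 //.
  exact: ln_pR_bound.
Qed.

Variables (pstar : 'I_n -> R) (p : 'I_n -> R).
Hypothesis pstar_simplex : simplex pstar.
Hypothesis pstar_max : forall q, simplex q -> Jobj P r q <= Jobj P r pstar.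
Hypothesis p_simplex : simplex p.

Let ratio w := pR r p w / pR r pstar w.
Let gain := \sum_(i < n) (p i - pstar i) * meanr P r i.
Let segment t i := pstar i + t * (p i - pstar i).

Lemma ratio_gt0 w : 0 < ratio w.
Proof. by rewrite divr_gt0 ?pR_gt0. Qed.

Lemma ln1D_ratio t w : 0 <= t <= 1 ->
  ln (1 + t * (ratio w - 1)) = ln (pR r (segment t) w) - ln (pR r pstar w).
Proof.
move=> t01; have hs := simplex_segment p_simplex pstar_simplex t01.
have pRs0 := pR_gt0 r w pstar_simplex.
rewrite -ln_div ?posrE ?(pR_gt0 r w hs) //.
rewrite /segment (pR_segment r p pstar t w) /ratio.
by congr ln; field; rewrite gt_eqF.
Qed.

Lemma integrable_ln1D_ratio t : 0 <= t <= 1 ->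
  P.-integrable setT (EFin \o (fun w => ln (1 + t * (ratio w - 1)))).
Proof.
move=> t01; have := integrableB measurableT
  (integrable_ln_pR (simplex_segment p_simplex pstar_simplex t01))
  (integrable_ln_pR pstar_simplex).
by apply: eq_integrable => // w _; rewrite /= ln1D_ratio.
Qed.

Lemma Rintegral_ln1D_ratio_le t : 0 <= t <= 1 ->
  \int[P]_(w in setT) ln (1 + t * (ratio w - 1)) <= t * gain.
Proof.
move=> t01; have hs := simplex_segment p_simplex pstar_simplex t01.
have := pstar_max hs; rewrite /Jobj.
have -> : \sum_(i < n) segment t i * meanr P r i
    = \sum_(i < n) pstar i * meanr P r i + t * gain.
  rewrite /gain mulr_sumr -big_split.
  by apply: eq_bigr => i _; rewrite /= mulrDl mulrA.
rewrite (eq_Rintegral _ (fun w _ => ln1D_ratio w t01)).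
by rewrite RintegralB ?integrable_ln_pR //; lra.
Qed.

Lemma Rintegral_ratio_le :
  P.-integrable setT (EFin \o ratio) /\ \int[P]_(w in setT) ratio w <= 1 + gain.
Proof.
pose f k w := k.+1%:R * ln (1 + k.+1%:R^-1 * (ratio w - 1)).
have k_ge1 k : 1 <= k.+1%:R :> R by rewrite ler1n.
have kV01 k : 0 <= (k.+1%:R : R)^-1 <= 1.
  by rewrite invr_ge0 ler0n invf_le1 ?ltr0n ?k_ge1.
have ratio1 w : -1 < ratio w - 1 by have := ratio_gt0 w; lra.
have [ratio1i ratio1B] : P.-integrable setT (EFin \o (fun w => ratio w - 1)) /\
    \int[P]_(w in setT) (ratio w - 1) <= gain.
  apply: (@nondecreasing_cvg_Rintegral_le _ _ _ _ f).
  - move=> k; apply: eq_integrable (integrableZl measurableT k.+1%:R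
      (integrable_ln1D_ratio (kV01 k))) => //.
  - by move=> w m k mk; apply: nondecreasing_mulr_ln1Dx; rewrite ?ler_nat.
  - by move=> w; exact: cvg_mulr_ln1Dx.
  - move=> k; have k0 : 0 < k.+1%:R :> R by rewrite ltr0n.
    rewrite RintegralZl ?integrable_ln1D_ratio //.
    have := Rintegral_ln1D_ratio_le (kV01 k).
    by rewrite -(ler_pM2l k0) mulrA divff ?gt_eqF // mul1r.
have onei : P.-integrable setT (EFin \o (fun=> 1 : R)).
  exact: finite_measure_integrable_cst.
have ratioi : P.-integrable setT (EFin \o ratio).
  apply: eq_integrable (integrableD measurableT ratio1i onei) => // w _.
  by rewrite /= -EFinD subrK.
split=> //; move: ratio1B; rewrite RintegralB //.
by rewrite probability_Rintegral_cst; lra.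
Qed.

Lemma Rintegral_ln_ratio_le : \int[P]_(w in setT) ln (ratio w) <= ln (1 + gain).
Proof.
have [ratioi ratioB] := Rintegral_ratio_le.
apply: Rintegral_ln_le ratio_gt0 ratioi _ ratioB.
have := integrableB measurableT
  (integrable_ln_pR p_simplex) (integrable_ln_pR pstar_simplex).
apply: eq_integrable => // w _.
by rewrite /= /ratio ln_div ?posrE ?(pR_gt0 r w p_simplex) ?(pR_gt0 r w pstar_simplex).
Qed.

End log_optimal.

Theorem mainTheorem20 (R : realType) (d : measure_display) (T : measurableType d)
  (P : probability T R) (n : nat) (r : T -> 'I_n -> R)
  (hn : (2 <= n)%N)
  (hint : forall i : 'I_n, P.-integrable setT (fun w => (r w i)%:E))
  (pstar : 'I_n -> R) (hpstar : simplex pstar)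
  (hmax : forall p : 'I_n -> R, simplex p -> Jobj P r p <= Jobj P r pstar) :
  forall p : 'I_n -> R, simplex p ->
    Rintegral P setT (fun w => ln (pR r p w / pR r pstar w))
    <= ln (1 + \sum_(i < n) (p i - pstar i) * meanr P r i).
Proof.
(* The bound holds for every n. *)
by move=> p hp; exact: (Rintegral_ln_ratio_le hint hpstar hmax hp).
Qed.
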